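(* Let $\mathbb F_q$ be a finite field and let $B \subseteq \mathbb F_q^m$ be $C$-weakly Sidorenko, with $r := \mathrm{rank}_{\mathrm{aff}}(B) \geq 1$. Then for every $n$, \[\mathrm{ex}_{\mathrm{aff}}(n,B) < q^{\,n - (n-r+1)/(C-r+1)}.\] Moreover, if $A \subseteq \mathbb F_q^n$ with $|A| = D q^{(1 - 1/(C-r+1))n}$ for some $D > 0$, then $A$ contains more than \[\left(1 - \frac{q^{r-1}}{D^{C-r+1}}\right)\frac{\alpha^C N^r}{|\mathrm{Aut}_{\mathrm{aff}}(B)|}\] subsets affinely isomorphic to $B$, where $N = q^n$ and $|A| = \alpha N$.
   Context: An affine relation on $x_1,\ldots,x_k$ is an equation $\sum_i \lambda_i x_i = 0$ with $\lambda_i \in \mathbb F_q$, $\sum_i \lambda_i = 0$; a set is affinely independent if it has no such relation with some $\lambda_i \ne 0$, and $\mathrm{rank}_{\mathrm{aff}}(B)$ is the size of a maximal affinely independent subset of $B$. For $B \subseteq \mathbb F_q^m$, $A \subseteq \mathbb F_q^n$, an affine homomorphism $B \to A$ is a map extending to an affine map $\mathbb F_q^m \to \mathbb F_q^n$; $\mathrm{hom}_{\mathrm{aff}}(B,A)$ is the number of them. An affine isomorphism is a bijective affine homomorphism whose inverse is an affine homomorphism; $\mathrm{Aut}_{\mathrm{aff}}(B)$ is the set of affine isomorphisms $B \to B$. A subset $B' \subseteq A$ is affinely isomorphic to $B$ if there is an affine isomorphism $B \to B'$; $A$ contains an affine copy of $B$ if it has such a subset. $\mathrm{ex}_{\mathrm{aff}}(n,B)$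 is the maximum size of a subset of $\mathbb F_q^n$ containing no affine copy of $B$. $B$ is $C$-weakly Sidorenko if for every $n$ and every $A \subseteq \mathbb F_q^n$ with $|A| = \alpha q^n$, $\mathrm{hom}_{\mathrm{aff}}(B,A) \geq \alpha^C (q^n)^{\mathrm{rank}_{\mathrm{aff}}(B)}$. *)

From HB Require Import structures.
From mathcomp Require Import all_boot all_order all_algebra.
From mathcomp Require Import all_classical all_reals all_analysis.
Set Implicit Arguments. Unset Strict Implicit. Unset Printing Implicit Defensive.
Import Order.TTheory GRing.Theory Num.Theory.
Local Open Scope ring_scope.

Section AffineDefs.
Variable F : finFieldType.

Definition aff_indep (m : nat) (S : {set 'rV[F]_m}) : bool :=
  [forall lam : {ffun 'rV[F]_m -> F},
     ((\sum_(x in S) lam x == 0) && (\sum_(x in S) lam x *: x == 0))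
       ==> [forall x in S, lam x == 0]].

(* affine rank: size of a maximal (= maximum, matroid) affinely independent subset *)
Definition rank_aff (m : nat) (B : {set 'rV[F]_m}) : nat :=
  \max_(S : {set 'rV[F]_m} | (S \subset B) && aff_indep S) #|S|.

Definition is_aff_on (m n : nat) (B : {set 'rV[F]_m}) (f : 'rV[F]_m -> 'rV[F]_n)
  : bool :=
  [exists M : 'M[F]_(m, n), exists b : 'rV[F]_n,
     [forall x in B, f x == x *m M + b]].

(* maps B -> A are represented as finite functions that vanish outside B *)
Definition supported_on (m n : nat) (B : {set 'rV[F]_m})
  (f : {ffun 'rV[F]_m -> 'rV[F]_n}) : bool :=
  [forall x, (x \notin B) ==> (f x == 0)].

Definition hom_aff (m n : nat) (B : {set 'rV[F]_m}) (A : {set 'rV[F]_n}) : nat :=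
  #|[set f : {ffun 'rV[F]_m -> 'rV[F]_n} |
      [&& supported_on B f, is_aff_on B f & [forall x in B, f x \in A]]]|.

Definition aff_iso (m n : nat) (B : {set 'rV[F]_m}) (B' : {set 'rV[F]_n})
  (f : {ffun 'rV[F]_m -> 'rV[F]_n}) : bool :=
  [&& is_aff_on B f,
      [forall x in B, forall y in B, (f x == f y) ==> (x == y)],
      f @: B == B' &
      [exists g : {ffun 'rV[F]_n -> 'rV[F]_m},
         is_aff_on B' g && [forall x in B, g (f x) == x]]].

Definition aut_aff_card (m : nat) (B : {set 'rV[F]_m}) : nat :=
  #|[set f : {ffun 'rV[F]_m -> 'rV[F]_m} | supported_on B f && aff_iso B B f]|.

Definition aff_isomorphic (m n : nat) (B : {set 'rV[F]_m}) (B' : {set 'rV[F]_n})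
  : bool :=
  [exists f : {ffun 'rV[F]_m -> 'rV[F]_n}, aff_iso B B' f].

Definition aff_copies (m n : nat) (B : {set 'rV[F]_m}) (A : {set 'rV[F]_n})
  : {set {set 'rV[F]_n}} :=
  [set B' : {set 'rV[F]_n} | (B' \subset A) && aff_isomorphic B B'].

Definition contains_aff_copy (m n : nat) (A : {set 'rV[F]_n}) (B : {set 'rV[F]_m})
  : bool := (0 < #|aff_copies B A|)%N.

Definition ex_aff (m : nat) (n : nat) (B : {set 'rV[F]_m}) : nat :=
  \max_(A : {set 'rV[F]_n} | ~~ contains_aff_copy A B) #|A|.

Definition weakly_sidorenko (R : realType) (C : R) (m : nat)
  (B : {set 'rV[F]_m}) : Prop :=
  forall (n : nat) (A : {set 'rV[F]_n}),
    (#|A|%:R / (#|F| ^ n)%:R) `^ C * ((#|F| ^ n)%:R ^+ rank_aff B)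
      <= (hom_aff B A)%:R :> R.

End AffineDefs.

From HB Require Import structures.
From mathcomp Require Import all_boot all_order all_algebra.
From mathcomp Require Import all_classical all_reals all_analysis.
From mathcomp Require Import ring lra.
Import Order.TTheory GRing.Theory Num.Theory.
Import fintype.
Local Open Scope ring_scope.

Set Implicit Arguments. Unset Strict Implicit. Unset Printing Implicit Defensive.

(* Fix a maximal affinely independent S = {b0, s_1, ..., s_k} in B, k = r - 1;
   an affine homomorphism f : B -> A is determined by its values on S.  If the
   differences f s_j - f b0 are linearly independent, f is an affine
   isomorphism onto its image, and each copy of B in A is the image of at most
   |Aut_aff(B)| such maps.  Otherwise some f s_i - f b0 is a combination of the
   earlier differences, which leaves at most |A|^k q^i possibilities; summing
   over i < k, fewer than |A|^k q^k homomorphisms are degenerate.  Since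
   alpha^C N^r = |A|^k alpha^(C-r+1) N, the weak Sidorenko bound yields
     |A|^k (alpha^(C-r+1) N - q^k) < #copies * |Aut_aff(B)|,
   from which both bounds follow: without copies alpha^(C-r+1) N < q^k, and
   under the density hypothesis alpha^(C-r+1) N = D^(C-r+1).  The weak
   Sidorenko bound for a one-point set A forces C >= r, so C - r + 1 >= 1. *)

Section PrefixDependence.
Variable K : fieldType.

Definition prefix_comb (k n : nat) (W : 'M[K]_(k, n)) (i : 'I_k) (y : {ffun 'I_i -> K}) :=
  row i W == \sum_(j < i) y j *: row (widen_ord (ltnW (ltn_ord i)) j) W.

Lemma not_row_free_prefix_comb (k n : nat) (W : 'M[K]_(k, n)) :
  ~~ row_free W -> exists i : 'I_k, exists y : {ffun 'I_i -> K}, prefix_comb W y.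
Proof.
rewrite -kermx_eq0 => /rowV0Pn [v /sub_kermxP vW0 /rV0Pn [j0 vj0]].
have [i vi imax] := @arg_maxnP _ j0 (fun j => v 0 j != 0) val vj0.
have vW : v 0 i *: row i W + \sum_(j < k | (j < i)%N) v 0 j *: row j W = 0.
  rewrite -[RHS]vW0 mulmx_sum_row [RHS](bigD1 i) //=; congr (_ + _).
  rewrite big_mkcond [RHS]big_mkcond; apply: eq_bigr => j _ /=.
  case: ltngtP => [ji | ij | /val_inj ->]; last by rewrite eqxx.
  - by rewrite -val_eqE neq_ltn ji.
  - have -> : v 0 j = 0.
      by apply/eqP; move: ij; apply: contraTT => /imax /= /leq_gtF ->.
    by rewrite scale0r if_same.
rewrite (big_ord_narrow (ltnW (ltn_ord i))) /= in vW.
exists i, [ffun j => - v 0 (widen_ord (ltnW (ltn_ord i)) j) / v 0 i].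
apply/eqP/(scalerI vi); rewrite scaler_sumr.
move/eqP: vW; rewrite addr_eq0 => /eqP ->.
rewrite -sumrN; apply: eq_bigr => j _.
by rewrite ffunE scalerA mulrCA divff // mulr1 scaleNr.
Qed.

End PrefixDependence.

Section AffineMaps.
Variable F : finFieldType.

Lemma is_aff_onP (p n : nat) (D : {set 'rV[F]_p}) (f : 'rV[F]_p -> 'rV[F]_n) :
  reflect (exists M : 'M[F]_(p, n), exists b : 'rV[F]_n, {in D, forall y, f y = y *m M + b})
          (is_aff_on D f).
Proof.
apply: (iffP existsP) => [[M /existsP [b /forall_inP fMb]] | [M [b fMb]]].
  by exists M, b => y /fMb /eqP.
by exists M; apply/existsP; exists b; apply/forall_inP => y /fMb ->.
Qed.

Lemma is_aff_on_id (p : nat) (D : {set 'rV[F]_p}) (f : 'rV[F]_p -> 'rV[F]_p) :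
  {in D, f =1 id} -> is_aff_on D f.
Proof. by move=> fid; apply/is_aff_onP; exists 1%:M, 0 => y /fid ->; rewrite mulmx1 addr0. Qed.

Lemma is_aff_on_comp (p n l : nat) (D : {set 'rV[F]_p}) (E : {set 'rV[F]_n})
    (f : 'rV[F]_p -> 'rV[F]_n) (g : 'rV[F]_n -> 'rV[F]_l) (h : 'rV[F]_p -> 'rV[F]_l) :
  is_aff_on D f -> {in D, forall x, f x \in E} -> is_aff_on E g ->
  {in D, forall x, h x = g (f x)} -> is_aff_on D h.
Proof.
move=> /is_aff_onP [M [b fE]] fDE /is_aff_onP [M' [b' gE]] hE.
apply/is_aff_onP; exists (M *m M'), (b *m M' + b') => x xD.
by rewrite hE // gE ?fDE // fE // mulmxDl mulmxA addrA.
Qed.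

Lemma is_aff_on_comb (p n : nat) (D S : {set 'rV[F]_p}) (f : 'rV[F]_p -> 'rV[F]_n)
    (lam : 'rV[F]_p -> F) :
  is_aff_on D f -> S \subset D -> \sum_(y in S) lam y = 1 ->
  \sum_(y in S) lam y *: y \in D ->
  f (\sum_(y in S) lam y *: y) = \sum_(y in S) lam y *: f y.
Proof.
move=> /is_aff_onP [M [b fE]] /subsetP SD lam1 combD.
rewrite fE // mulmx_suml -[b]scale1r -lam1 scaler_suml -big_split /=.
by apply: eq_bigr => y yS; rewrite fE ?SD // scalerDr scalemxAl.
Qed.

Lemma aff_isoP (m n : nat) (B : {set 'rV[F]_m}) (B' : {set 'rV[F]_n})
    (f : {ffun 'rV[F]_m -> 'rV[F]_n}) :
  reflect [/\ is_aff_on B f, f @: B = B' &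
           exists2 g : {ffun 'rV[F]_n -> 'rV[F]_m}, is_aff_on B' g & {in B, cancel f g}]
          (aff_iso B B' f).
Proof.
apply: (iffP and4P) => [[fB _ /eqP fBB' /existsP [g /andP [gB' /forall_inP gf]]] |
                         [fB fBB' [g gB' gf]]].
  by split=> //; exists g => // x /gf /eqP.
split=> //; last by apply/existsP; exists g; rewrite gB'; apply/forall_inP => x /gf ->.
- apply/forall_inP => x xB; apply/forall_inP => y yB; apply/implyP => /eqP fxy.
  by rewrite -(gf x xB) -(gf y yB) fxy.
- by rewrite fBB'.
Qed.

Definition restrict (m n : nat) (B : {set 'rV[F]_m}) (f : 'rV[F]_m -> 'rV[F]_n) :=
  [ffun x => if x \in B then f x else 0].

Lemma restrictE (m n : nat) (B : {set 'rV[F]_m}) (f : 'rV[F]_m -> 'rV[F]_n) x :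
  x \in B -> restrict B f x = f x.
Proof. by move=> xB; rewrite ffunE xB. Qed.

Lemma supported_on_restrict (m n : nat) (B : {set 'rV[F]_m}) (f : 'rV[F]_m -> 'rV[F]_n) :
  supported_on B (restrict B f).
Proof. by apply/forallP => x; apply/implyP => /negbTE xB; rewrite ffunE xB. Qed.

Lemma supported_on_eq (m n : nat) (B : {set 'rV[F]_m}) (f g : {ffun 'rV[F]_m -> 'rV[F]_n}) :
  supported_on B f -> supported_on B g -> {in B, f =1 g} -> f = g.
Proof.
move=> /forallP f0 /forallP g0 fg; apply/ffunP => x.
have [/fg // | xB] := boolP (x \in B).
by rewrite (eqP (implyP (f0 x) xB)) (eqP (implyP (g0 x) xB)).
Qed.

Definition aff_homs (m n : nat) (B : {set 'rV[F]_m}) (A : {set 'rV[F]_n}) :=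
  [set f : {ffun 'rV[F]_m -> 'rV[F]_n} |
      [&& supported_on B f, is_aff_on B f & [forall x in B, f x \in A]]].

Lemma hom_affE (m n : nat) (B : {set 'rV[F]_m}) (A : {set 'rV[F]_n}) :
  hom_aff B A = #|aff_homs B A|.
Proof. by []. Qed.

Lemma aff_homsP (m n : nat) (B : {set 'rV[F]_m}) (A : {set 'rV[F]_n}) f :
  reflect [/\ supported_on B f, is_aff_on B f & {in B, forall x, f x \in A}]
          (f \in aff_homs B A).
Proof.
rewrite inE; apply: (iffP and3P) => -[fsupp faff fA]; split=> //; exact/forall_inP.
Qed.

Definition aff_embeddings (m n : nat) (B : {set 'rV[F]_m}) (A : {set 'rV[F]_n}) :=
  [set f in aff_homs B A | aff_iso B (f @: B) f].

End AffineMaps.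

Section MaxAffIndep.
Variables (F : finFieldType) (m : nat) (B : {set 'rV[F]_m}).

Lemma exists_max_aff_indep :
  exists2 S : {set 'rV[F]_m}, (S \subset B) && aff_indep S & #|S| = rank_aff B.
Proof.
have indep0 : (finset.set0 \subset B) && aff_indep (finset.set0 : {set 'rV[F]_m}).
  rewrite finset.sub0set; apply/forallP => lam; apply/implyP => _.
  by apply/forall_inP => x; rewrite inE.
have [S SB Smax] := @arg_maxnP _ finset.set0 (fun S => (S \subset B) && aff_indep S)
  (fun S => #|S|) indep0.
exists S => //; apply/eqP; rewrite eqn_leq; apply/andP; split.
  exact: leq_bigmax_cond.
by apply/bigmax_leqP => T; apply: Smax.
Qed.

Variable S : {set 'rV[F]_m}.
Hypotheses (SB : S \subset B) (Sind : aff_indep S) (Scard : #|S| = rank_aff B).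

Lemma max_aff_indep_span x : x \in B ->
  exists2 lam : 'rV[F]_m -> F, \sum_(y in S) lam y = 1 & \sum_(y in S) lam y *: y = x.
Proof.
move=> xB; have [xS | xNS] := boolP (x \in S).
  exists (fun y => (y == x)%:R).
    by rewrite (bigD1 x) //= eqxx big1 ?addr0 // => y /andP [_ /negbTE ->].
  rewrite (bigD1 x) //= eqxx scale1r big1 ?addr0 // => y /andP [_ /negbTE ->].
  by rewrite scale0r.
have /forallPn [lam] : ~~ aff_indep (x |: S).
  apply/negP => xSind.
  have : (#|x |: S| <= rank_aff B)%N.
    by apply: leq_bigmax_cond; rewrite xSind finset.subUset finset.sub1set xB SB.
  by rewrite cardsU1 xNS Scard ltnn.
rewrite negb_imply !big_setU1 //= => /andP [/andP [/eqP sum0 /eqP comb0]].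
move=> /forall_inPn [z zxS nz].
have lamx : lam x != 0.
  apply: contraNneq nz => lamx0; move: sum0 comb0.
  rewrite lamx0 scale0r !add0r => sum0 comb0.
  have := forallP Sind lam; rewrite sum0 comb0 !eqxx => /forall_inP lamS0.
  by move: zxS; rewrite in_setU1 => /predU1P [-> | /lamS0]; rewrite ?lamx0.
exists (fun y => - lam y / lam x).
  rewrite -mulr_suml sumrN.
  by move/eqP: sum0; rewrite addrC addr_eq0 => /eqP ->; rewrite opprK divff.
rewrite (eq_bigr (fun y => (- lam x)^-1 *: (lam y *: y))); last first.
  by move=> y _; rewrite scalerA mulrC invrN mulrN mulNr.
rewrite -scaler_sumr.
move/eqP: comb0; rewrite addrC addr_eq0 => /eqP ->.
by rewrite -scaleNr scalerA mulVf ?scale1r // oppr_eq0.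
Qed.

Lemma eq_on_max_aff_indep (n : nat) (f g : 'rV[F]_m -> 'rV[F]_n) :
  is_aff_on B f -> is_aff_on B g -> {in S, f =1 g} -> {in B, f =1 g}.
Proof.
move=> fB gB fgS x xB; have [lam lam1 lamx] := max_aff_indep_span xB.
rewrite -lamx in xB *.
rewrite (is_aff_on_comb fB SB lam1 xB) (is_aff_on_comb gB SB lam1 xB).
by apply: eq_bigr => y /fgS ->.
Qed.

Section Frame.
Variables (b0 : 'rV[F]_m) (b0S : b0 \in S).
Local Notation k := #|S :\ b0|.

Definition frame_pt (j : 'I_k) : 'rV[F]_m := enum_val j.

Definition frame_mx (n : nat) (f : 'rV[F]_m -> 'rV[F]_n) : 'M[F]_(k, n) :=
  \matrix_(j < k) (f (frame_pt j) - f b0).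

Lemma frame_pt_in j : frame_pt j \in B.
Proof. by apply: (subsetP SB); have := enum_valP j; rewrite in_setD1 => /andP []. Qed.

Lemma frame_origin_in : b0 \in B.
Proof. exact: subsetP SB b0 b0S. Qed.

Lemma eq_on_frame (n : nat) (f g : 'rV[F]_m -> 'rV[F]_n) :
  is_aff_on B f -> is_aff_on B g -> f b0 = g b0 ->
  (forall j, f (frame_pt j) = g (frame_pt j)) -> {in B, f =1 g}.
Proof.
move=> fB gB fg0 fgj; apply: eq_on_max_aff_indep => // y yS.
have [-> // | yb0] := eqVneq y b0.
have yS' : y \in S :\ b0 by rewrite in_setD1 yb0.
by rewrite -(enum_rankK_in yS' yS') fgj.
Qed.

Lemma aff_iso_of_row_free (n : nat) (f : {ffun 'rV[F]_m -> 'rV[F]_n}) :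
  is_aff_on B f -> row_free (frame_mx f) -> aff_iso B (f @: B) f.
Proof.
move=> fB /row_freeP [X fX1].
(* X is a right inverse of frame_mx f, so g undoes f on the frame, hence on B. *)
pose g := [ffun y => (y - f b0) *m (X *m frame_mx id) + b0].
have gaff : is_aff_on (f @: B) g.
  apply/is_aff_onP; exists (X *m frame_mx id), (b0 - f b0 *m (X *m frame_mx id)) => y _.
  by rewrite ffunE mulmxBl addrCA addrC.
have gfB : is_aff_on B (fun x => g (f x)).
  by apply: is_aff_on_comp fB _ gaff _ => // x xB; apply: imset_f.
apply/aff_isoP; split=> //; exists g => //.
apply: (eq_on_frame gfB (is_aff_on_id (fun x _ => erefl x))) => [|j].
  by rewrite ffunE subrr mul0mx add0r.
rewrite ffunE mulmxA.
have -> : f (frame_pt j) - f b0 = row j (frame_mx f) by rewrite rowK.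
by rewrite -row_mul fX1 -row_mul mul1mx rowK subrK.
Qed.

Definition dependent_homs (n : nat) (A : {set 'rV[F]_n}) (i : 'I_k) :=
  [set f in aff_homs B A | [exists y : {ffun 'I_i -> F}, prefix_comb (frame_mx f) y]].

Lemma card_dependent_homs (n : nat) (A : {set 'rV[F]_n}) (i : 'I_k) :
  (#|dependent_homs A i| <= #|A| ^ k * #|F| ^ i)%N.
Proof.
(* Slot i stores f b0: f (frame_pt i) is recovered from the other slots and y. *)
pose code (f : {ffun 'rV[F]_m -> 'rV[F]_n}) :=
  ([ffun j => if j == i then f b0 else f (frame_pt j)],
   odflt 0 [pick y : {ffun 'I_i -> F} | prefix_comb (frame_mx f) y]).
pose codes := finset.setX [set c : {ffun 'I_k -> 'rV[F]_n} | c \in ffun_on (mem A)]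
                   [set: {ffun 'I_i -> F}].
have -> : (#|A| ^ k * #|F| ^ i)%N = #|codes|.
  by rewrite cardsX (cardsE (ffun_on _)) card_ffun_on cardsT card_ffun !card_ord.
rewrite -(card_in_imset (f := code)); last first.
  move=> f g /setIdP [/aff_homsP [fsupp fB _] /existsP [yf fyf]].
  move=> /setIdP [/aff_homsP [gsupp gB _] /existsP [yg gyg]] [/ffunP fg].
  have fg0 : f b0 = g b0 by have := fg i; rewrite !ffunE eqxx.
  have fgj j : j != i -> f (frame_pt j) = g (frame_pt j).
    by move=> /negbTE ji; have := fg j; rewrite !ffunE ji.
  case: pickP => [yf' /eqP fyf' | /(_ yf)]; last by rewrite fyf.
  case: pickP => [yg' /eqP gyg' | /(_ yg)] /=; last by rewrite gyg.
  move=> eyfg; apply: supported_on_eq fsupp gsupp _.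
  apply: (eq_on_frame fB gB fg0) => j; have [-> | /fgj //] := eqVneq j i.
  have : row i (frame_mx f) = row i (frame_mx g).
    rewrite fyf' gyg' eyfg; apply: eq_bigr => l _.
    by rewrite !rowK fg0 fgj // -val_eqE /= ltn_eqF.
  by rewrite !rowK fg0 => /addIr.
apply: subset_leq_card; apply/subsetP => _ /imsetP [f /setIdP [/aff_homsP [_ _ fA] _] ->].
rewrite /code /codes !finset.inE andbT; apply/ffun_onP => j; rewrite ffunE.
by case: ifP => _; apply: fA; [exact: frame_origin_in | exact: frame_pt_in].
Qed.

Lemma card_not_row_free (n : nat) (A : {set 'rV[F]_n}) :
  (#|[set f in aff_homs B A | ~~ row_free (frame_mx f)]|
     <= \sum_(i < k) #|A| ^ k * #|F| ^ i)%N.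
Proof.
apply: (@leq_trans (\sum_(i < k) #|dependent_homs A i|)); last first.
  by apply: leq_sum => i _; apply: card_dependent_homs.
apply: leq_trans (unstable.card_big_setU _ _ _); apply: subset_leq_card.
apply/subsetP => f /setIdP [fhom /not_row_free_prefix_comb [i [y fy]]].
by apply/bigcupP; exists i => //; apply/setIdP; split=> //; apply/existsP; exists y.
Qed.

Lemma card_aff_homs_le (n : nat) (A : {set 'rV[F]_n}) :
  (#|aff_homs B A| <= #|aff_embeddings B A| + \sum_(i < k) #|A| ^ k * #|F| ^ i)%N.
Proof.
apply: leq_trans (leq_add (leqnn _) (card_not_row_free A)).
apply: leq_trans (leq_card_setU _ _); apply: subset_leq_card.
apply/subsetP => f fhom; apply/setUP.
have [free | nfree] := boolP (row_free (frame_mx f)); [left | right]; apply/setIdP; split=> //.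
by apply: aff_iso_of_row_free => //; have /aff_homsP [] := fhom.
Qed.

End Frame.

End MaxAffIndep.

Section Copies.
Variables (F : finFieldType) (m n : nat) (B : {set 'rV[F]_m}) (A : {set 'rV[F]_n}).

Lemma aff_embeddingsP (f : {ffun 'rV[F]_m -> 'rV[F]_n}) :
  f \in aff_embeddings B A ->
  [/\ supported_on B f, is_aff_on B f, {in B, forall x, f x \in A} &
      exists2 g : {ffun 'rV[F]_n -> 'rV[F]_m}, is_aff_on (f @: B) g & {in B, cancel f g}].
Proof. by case/setIdP => /aff_homsP [? ? ?] /aff_isoP [_ _ ?]. Qed.

Lemma card_embeddings_onto (B' : {set 'rV[F]_n}) :
  (#|[set f in aff_embeddings B A | f @: B == B']| <= aut_aff_card B)%N.
Proof.
set J := [set f in _ | _].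
have [f0 f0J | J0] := pickP (mem J); last by rewrite (eq_card0 J0).
have /setIdP [/aff_embeddingsP [_ f0B _ [g0 g0B' g0f0]] /eqP f0BB'] := f0J.
rewrite f0BB' in g0B'.
have f0g0 : {in B', cancel g0 f0} by rewrite -f0BB' => _ /imsetP [x xB ->]; rewrite g0f0.
have JB' h : h \in J -> {in B, forall x, h x \in B'}.
  by case/setIdP => _ /eqP <- x xB; apply: imset_f.
(* Composing with the inverse g0 of one embedding f0 onto B' maps every
   embedding onto B' injectively to an automorphism of B. *)
pose sigma (h : {ffun 'rV[F]_m -> 'rV[F]_n}) := restrict B (fun x => g0 (h x)).
have inj : {in J &, injective sigma}.
  move=> h1 h2 h1J h2J /ffunP h12.
  have /setIdP [/aff_embeddingsP [h1supp _ _ _] _] := h1J.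
  have /setIdP [/aff_embeddingsP [h2supp _ _ _] _] := h2J.
  apply: supported_on_eq h1supp h2supp _ => x xB.
  have := h12 x; rewrite !restrictE // => /(congr1 f0).
  by rewrite !f0g0 ?(JB' h1) ?(JB' h2).
rewrite -(card_in_imset inj); apply: subset_leq_card.
apply/subsetP => _ /imsetP [h hJ ->].
have /setIdP [/aff_embeddingsP [_ hB _ [gh ghB hgh]] /eqP hBB'] := hJ.
rewrite inE supported_on_restrict; apply/aff_isoP; split.
- by apply: is_aff_on_comp hB (JB' h hJ) g0B' _ => x xB; rewrite restrictE.
- rewrite (eq_in_imset (fun x xB => restrictE _ xB)) imset_comp hBB' -f0BB' -imset_comp.
  by rewrite (eq_in_imset g0f0) imset_id.
- exists [ffun y => gh (f0 y)].
    apply: is_aff_on_comp f0B _ ghB _ => [x xB | x _]; last by rewrite ffunE.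
    by rewrite hBB' -f0BB' imset_f.
  by move=> x xB; rewrite restrictE // ffunE f0g0 ?(JB' h hJ) ?hgh.
Qed.

Lemma card_aff_embeddings_le :
  (#|aff_embeddings B A| <= #|aff_copies B A| * aut_aff_card B)%N.
Proof.
rewrite -sum1_card (partition_big (fun f : {ffun 'rV[F]_m -> 'rV[F]_n} => f @: B)
                                  (mem (aff_copies B A))) /=.
  rewrite -sum_nat_const leq_sum // => B' _.
  by rewrite sum1dep_card card_embeddings_onto.
move=> f fE; have /aff_embeddingsP [_ _ fA _] := fE.
rewrite inE; apply/andP; split.
  by apply/subsetP => _ /imsetP [x xB ->]; apply: fA.
by apply/existsP; exists f; case/setIdP: fE.
Qed.

End Copies.

Lemma geom_sum_lt (q k : nat) : (1 < q)%N -> (\sum_(i < k) q ^ i < q ^ k)%N.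
Proof.
move=> q_gt1; apply: (@leq_ltn_trans (q ^ k).-1).
  by rewrite predn_exp leq_pmull // ltn_predRL.
by rewrite ltn_predL expn_gt0 ltnW.
Qed.

Section HomCount.
Variables (F : finFieldType) (m : nat) (B : {set 'rV[F]_m}).

Lemma aut_aff_card_gt0 : (0 < aut_aff_card B)%N.
Proof.
have restrict_id : {in B, restrict B id =1 id} by move=> x /restrictE.
apply/card_gt0P; exists (restrict B id); rewrite inE supported_on_restrict /=.
apply/aff_isoP; split; first exact: is_aff_on_id.
  by rewrite (eq_in_imset restrict_id) imset_id.
by exists (restrict B id) => [|x xB]; [exact: is_aff_on_id | rewrite !restrict_id].
Qed.

Lemma hom_aff_set1 (n : nat) (a : 'rV[F]_n) : (hom_aff B [set a] <= 1)%N.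
Proof.
rewrite -[X in (_ <= X)%N](cards1 (restrict B (fun=> a) : {ffun 'rV[F]_m -> 'rV[F]_n})).
apply/subset_leq_card/subsetP.
move=> f /aff_homsP [fsupp _ fa]; apply/set1P.
apply: supported_on_eq fsupp (supported_on_restrict _ _) _ => x xB.
by rewrite restrictE //; apply/set1P/fa.
Qed.

Lemma hom_aff_lt (n : nat) (A : {set 'rV[F]_n}) : (0 < rank_aff B)%N -> (0 < #|A|)%N ->
  (hom_aff B A < #|aff_copies B A| * aut_aff_card B
                 + #|A| ^ (rank_aff B).-1 * #|F| ^ (rank_aff B).-1)%N.
Proof.
move=> r_gt0 A_gt0; have [S /andP [SB Sind] Scard] := exists_max_aff_indep B.
have [b0 b0S] : exists b0, b0 \in S by apply/card_gt0P; rewrite Scard.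
have -> : (rank_aff B).-1 = #|S :\ b0| by rewrite -Scard (cardsD1 b0 S) b0S.
rewrite hom_affE; apply: leq_ltn_trans (card_aff_homs_le SB Sind Scard b0S A) _.
rewrite -addnS leq_add ?card_aff_embeddings_le // -big_distrr ltn_pmul2l ?expn_gt0 ?A_gt0 //.
exact/geom_sum_lt/card_finNzRing_gt1.
Qed.

End HomCount.

Lemma powR_gt1 (R : realType) (a x : R) : 1 < a -> 0 < x -> 1 < a `^ x.
Proof.
move=> a_gt1 x_gt0; rewrite /powR gt_eqF ?(lt_trans ltr01 a_gt1) //.
by rewrite expR_gt1 mulr_gt0 // ln_gt0.
Qed.

Lemma powR_natD (R : realType) (a s : R) (k : nat) :
  0 < a -> a `^ (k%:R + s) = a ^+ k * a `^ s.
Proof.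
move=> a_gt0; rewrite powRD ?(gt_eqF a_gt0) ?implybT //.
by rewrite powR_mulrn // ltW.
Qed.

Lemma ltr_powRV (R : realType) (x y e : R) :
  0 < e -> 0 <= x -> 0 <= y -> x `^ e < y -> x < y `^ e^-1.
Proof.
move=> e_gt0 x_ge0 y_ge0 xy.
rewrite -[x]powRr1 // -(divff (lt0r_neq0 e_gt0)) powRrM.
by apply: gt0_ltr_powR; rewrite ?invr_gt0 ?nnegrE ?powR_ge0.
Qed.

Lemma powR_density (R : realType) (q D e : R) (n : nat) :
  0 < q -> 0 < D -> e != 0 ->
  (D * q `^ ((1 - 1 / e) * n%:R) / q ^+ n) `^ e * q ^+ n = D `^ e.
Proof.
move=> q_gt0 D_gt0 e_neq0.
rewrite -(powR_mulrn _ (ltW q_gt0)) -mulrA -powRB ?(gt_eqF q_gt0) ?implybT //.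
have -> : (1 - 1 / e) * n%:R - n%:R = - (n%:R / e) by field.
rewrite powRM ?ltW ?powR_gt0 // -powRrM.
have -> : - (n%:R / e) * e = - n%:R by field.
by rewrite powRN -mulrA mulVf ?mulr1 // gt_eqF ?powR_gt0.
Qed.

Section SidorenkoBounds.
Variables (R : realType) (F : finFieldType) (m : nat) (B : {set 'rV[F]_m}) (C : R).
Hypotheses (sidoB : weakly_sidorenko C B) (r_gt0 : (0 < rank_aff B)%N).
Local Notation q := (#|F|%:R : R).
Local Notation r := (rank_aff B).
Local Notation k := (rank_aff B).-1.
Local Notation kappa := (C - r%:R + 1).

Lemma natr_card_gt1 : 1 < q.
Proof. by rewrite ltr1n card_finNzRing_gt1. Qed.

Lemma natr_card_gt0 : 0 < q.
Proof. exact: lt_trans ltr01 natr_card_gt1. Qed.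

Lemma rank_le_sidorenko_exponent : r%:R <= C.
Proof.
have q_ge0 : 0 <= q := ler0n _ _.
have : (hom_aff B [set 0 : 'rV[F]_1])%:R <= 1 :> R by rewrite lern1 hom_aff_set1.
apply: contra_leT => C_lt_r; apply: (lt_le_trans _ (sidoB [set 0 : 'rV[F]_1])).
rewrite cards1 expn1 div1r -powR_inv1 // -powRrM -powR_mulrn // -powRD; last first.
  by rewrite (gt_eqF natr_card_gt0) implybT.
apply: powR_gt1 natr_card_gt1 _.
by rewrite mulN1r addrC subr_gt0 ltNge.
Qed.

Lemma natr_rank : r%:R = k%:R + 1 :> R.
Proof. by rewrite natr1 prednK. Qed.

Lemma kappa_ge1 : 1 <= kappa.
Proof. by rewrite lerDr subr_ge0 rank_le_sidorenko_exponent. Qed.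

Lemma sidorenko_exponent_split (a N : R) : 0 < a -> 0 < N ->
  (a / N) `^ C * N ^+ r = a ^+ k * ((a / N) `^ kappa * N).
Proof.
move=> a_gt0 N_gt0.
have C_eq : C = k%:R + kappa by rewrite natr_rank; lra.
rewrite [in LHS]C_eq powR_natD ?divr_gt0 // -(prednK r_gt0) exprSr.
rewrite mulrACA -exprMn divfK ?gt_eqF //; lra.
Qed.

Lemma copies_aut_lower_bound (n : nat) (A : {set 'rV[F]_n}) : (0 < #|A|)%N ->
  #|A|%:R ^+ k * ((#|A|%:R / q ^+ n) `^ kappa * q ^+ n - q ^+ k)
    < (#|aff_copies B A| * aut_aff_card B)%:R.
Proof.
move=> A_gt0; have a_gt0 : 0 < #|A|%:R :> R by rewrite ltr0n.
have N_gt0 : 0 < q ^+ n by rewrite exprn_gt0 // natr_card_gt0.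
have lower := sidoB A; rewrite natrX sidorenko_exponent_split // in lower.
have upper := hom_aff_lt r_gt0 A_gt0; rewrite -(ltr_nat R) natrD !natrM !natrX in upper.
by rewrite mulrBr ltrBlDr natrM (le_lt_trans lower upper).
Qed.

Lemma card_lt_of_no_copy (n : nat) (A : {set 'rV[F]_n}) :
  ~~ contains_aff_copy A B -> (0 < #|A|)%N ->
  #|A|%:R < (q ^+ k / q ^+ n) `^ kappa^-1 * q ^+ n.
Proof.
move=> noA A_gt0; have N_gt0 : 0 < q ^+ n by rewrite exprn_gt0 // natr_card_gt0.
have no_copy : #|aff_copies B A| = 0%N by apply/eqP; rewrite -leqn0 leqNgt.
have := copies_aut_lower_bound A_gt0.
rewrite no_copy mul0n pmulr_rlt0 ?exprn_gt0 ?ltr0n // subr_lt0 -ltr_pdivlMr //.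
move/ltr_powRV; rewrite -ltr_pdivrMr //; apply.
- exact: lt_le_trans ltr01 kappa_ge1.
- exact: divr_ge0 (ler0n _ _) (ltW N_gt0).
- exact: divr_ge0 (ltW (exprn_gt0 _ natr_card_gt0)) (ltW N_gt0).
Qed.

Lemma ex_aff_lt (n : nat) :
  (ex_aff n B)%:R < q `^ (n%:R - (n%:R - r%:R + 1) / kappa).
Proof.
have q_ge0 : 0 <= q := ltW natr_card_gt0.
suff -> : q `^ (n%:R - (n%:R - r%:R + 1) / kappa) = (q ^+ k / q ^+ n) `^ kappa^-1 * q ^+ n.
  have bound_gt0 : 0 < (q ^+ k / q ^+ n) `^ kappa^-1 * q ^+ n.
    by rewrite mulr_gt0 ?powR_gt0 ?divr_gt0 ?exprn_gt0 ?natr_card_gt0.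
  apply: (big_ind (fun v : nat => v%:R < _)) => // [x y|A noA].
    by rewrite /maxn; case: ifP.
  by have [-> // | /(card_lt_of_no_copy noA)] := posnP #|A|.
rewrite -[q ^+ k](powR_mulrn _ q_ge0) -[q ^+ n](powR_mulrn _ q_ge0).
rewrite -powRB ?(gt_eqF natr_card_gt0) ?implybT // -powRrM.
rewrite -powRD ?(gt_eqF natr_card_gt0) ?implybT //.
by congr (q `^ _); rewrite natr_rank; ring.
Qed.

Lemma card_aff_copies_gt (n : nat) (A : {set 'rV[F]_n}) (D : R) : 0 < D ->
  #|A|%:R = D * q `^ ((1 - 1 / kappa) * n%:R) ->
  (1 - q ^+ k / D `^ kappa) * ((#|A|%:R / q ^+ n) `^ C * (q ^+ n) ^+ r)
    / (aut_aff_card B)%:R < (#|aff_copies B A|)%:R.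
Proof.
move=> D_gt0 A_eq.
have q_gt0 : 0 < q := natr_card_gt0.
have kappa_neq0 : kappa != 0 by rewrite gt_eqF // (lt_le_trans ltr01 kappa_ge1).
have N_gt0 : 0 < q ^+ n by rewrite exprn_gt0.
have a_gt0 : 0 < #|A|%:R :> R by rewrite A_eq mulr_gt0 // powR_gt0.
have density : (#|A|%:R / q ^+ n) `^ kappa * q ^+ n = D `^ kappa.
  by rewrite A_eq powR_density.
rewrite sidorenko_exponent_split // density ltr_pdivrMr ?ltr0n ?aut_aff_card_gt0 //.
have A_gt0 : (0 < #|A|)%N by rewrite -(ltr0n R).
have := copies_aut_lower_bound A_gt0; rewrite density natrM => gap.
by rewrite mulrBl mul1r mulrCA divfK ?gt_eqF ?powR_gt0 // -mulrBr.
Qed.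

End SidorenkoBounds.

Theorem lemma3p2 (R : realType) (F : finFieldType) (m : nat)
  (B : {set 'rV[F]_m}) (C : R) :
  weakly_sidorenko C B ->
  (1 <= rank_aff B)%N ->
  let q : R := (#|F|)%:R in
  let r : nat := rank_aff B in
  (forall n : nat,
     (ex_aff n B)%:R < q `^ (n%:R - (n%:R - r%:R + 1) / (C - r%:R + 1)))
  /\
  (forall (n : nat) (A : {set 'rV[F]_n}) (D : R),
     0 < D ->
     (#|A|)%:R = D * q `^ ((1 - 1 / (C - r%:R + 1)) * n%:R) ->
     let N : R := q ^+ n in
     let alpha : R := (#|A|)%:R / N in
     (1 - q ^+ r.-1 / D `^ (C - r%:R + 1)) * (alpha `^ C * N ^+ r)
       / (aut_aff_card B)%:R
     < (#|aff_copies B A|)%:R).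
Proof.
move=> sidoB r_gt0 q r; split=> [n | n A D D_gt0 A_eq].
  exact: ex_aff_lt.
exact: card_aff_copies_gt.
Qed.
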